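(* Let $(G,r,k,c,\pi)$ be an instance of $k$-PCST with optimal value $\mathrm{OPT}$. Suppose there exists an optimal solution $F^{\star}=(V^{\star},E^{\star})$ of this instance with $\sum_{e\in E^{\star}}c(e)\le \mathrm{OPT}/2$. Then the output $F_{\mathrm{OUT}}=(V_{\mathrm{OUT}},E_{\mathrm{OUT}})$ of the algorithm $\mathcal{A}$ described below satisfies \[ \sum_{e\in E_{\mathrm{OUT}}}c(e)+\sum_{v\notin V_{\mathrm{OUT}}}\pi(v)\le 3\,\mathrm{OPT}. \]
   Context: An instance of $k$-PCST consists of an undirected connected graph $G=(V,E)$, a root $r\in V$, an integer $k$, a nonnegative edge cost $c:E\to\mathbb{R}_+$ and a nonnegative penalty $\pi:V\to\mathbb{R}_+$. A feasible solution is a subtree $F=(V_F,E_F)$ of $G$ with $r\in V_F$ and $|V_F|\ge k$, of cost $\sum_{e\in E_F}c(e)+\sum_{v\in V\setminus V_F}\pi(v)$; $\mathrm{OPT}$ is the minimum cost. The PCST instance $(G,r,c,\pi)$ is the same problem without the constraint $|V_F|\ge k$; the rooted $k$-MST instance $(G,r,k,c)$ asks for a subtree containing $r$ with at least $k$ vertices minimizing total edge cost. Procedure 1 is the Goemans–Williamson primal-dual algorithm for PCST, which returns a subtree $F=(V_F,E_F)$ containing $r$ whose PCST cost is at most $2$ times the optimal PCST value. Procedure 2 is Garg's primal-dual algorithm for rooted $k$-MST, which returns a subtree containing $r$ with at least $k$ vertices whose edge cost is at most $2$ times the optimal rooted $k$-MST value. Algorithm $\mathcal{A}$: Step 1: apply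 Procedure 1 to $(G,r,c,\pi)$ obtaining $F_{\mathrm{PCST}}=(V_{\mathrm{PCST}},E_{\mathrm{PCST}})$; if $|V_{\mathrm{PCST}}|\ge k$, return $F_{\mathrm{PCST}}$; otherwise go to Step 2. Step 2: apply Procedure 2 to $(G,r,k,c)$ obtaining $F_{k\text{-MST}}=(V_{k\text{-MST}},E_{k\text{-MST}})$. Step 3: form the graph $G'=(V_{\mathrm{PCST}}\cup V_{k\text{-MST}},E_{\mathrm{PCST}}\cup E_{k\text{-MST}})$, compute a minimum spanning tree $F_{\mathrm{OUT}}$ of $G'$ with respect to $c$, and return it. *)

From mathcomp Require Import all_boot all_order all_algebra.
Set Implicit Arguments. Unset Strict Implicit. Unset Printing Implicit Defensive.
Import Order.TTheory GRing.Theory Num.Theory.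
Local Open Scope ring_scope.

Section KPCST.
Variable V : finType.   (* vertex set of G is the whole finite type V *)

(* A subgraph is a pair (vertex set, edge set); an edge is a 2-element set of vertices. *)
Definition subgraph := ({set V} * {set {set V}})%type.

Definition is_edge_set (E : {set {set V}}) : Prop :=
  forall e, e \in E -> #|e| = 2%N.

Definition edge_rel (E : {set {set V}}) : rel V := fun x y => [set x; y] \in E.

Definition connected_on (W : {set V}) (E : {set {set V}}) : Prop :=
  forall x y, x \in W -> y \in W -> connect (edge_rel E) x y.

Definition is_subgraph_of (W : {set V}) (E : {set {set V}}) (F : subgraph) : Prop :=
  [/\ F.1 \subset W, F.2 \subset E & forall e, e \in F.2 -> e \subset F.1].

(* F is a tree: connected, nonempty, with |E_F| = |V_F| - 1 *)
Definition is_tree (F : subgraph) : Prop :=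
  connected_on F.1 F.2 /\ #|F.2|.+1 = #|F.1|.

Definition rooted_subtree (E : {set {set V}}) (r : V) (F : subgraph) : Prop :=
  [/\ is_subgraph_of [set: V] E F, is_tree F & r \in F.1].

Variable R : realFieldType.

Definition edge_cost (c : {set V} -> R) (F : subgraph) : R :=
  \sum_(e in F.2) c e.

Definition penalty (pi : V -> R) (F : subgraph) : R :=
  \sum_(v in ~: F.1) pi v.

Definition pcst_cost (c : {set V} -> R) (pi : V -> R) (F : subgraph) : R :=
  edge_cost c F + penalty pi F.

(* feasible solutions of k-PCST (equivalently of rooted k-MST) *)
Definition kpcst_feasible (E : {set {set V}}) (r : V) (k : nat) (F : subgraph) : Prop :=
  rooted_subtree E r F /\ (k <= #|F.1|)%N.

Definition kpcst_optimal (E : {set {set V}}) (r : V) (k : nat)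
  (c : {set V} -> R) (pi : V -> R) (F : subgraph) : Prop :=
  kpcst_feasible E r k F /\
  forall F', kpcst_feasible E r k F' -> pcst_cost c pi F <= pcst_cost c pi F'.

(* Specification of Procedure 1 (Goemans--Williamson): a rooted subtree whose
   PCST cost is at most twice the optimal PCST value. *)
Definition pcst_2approx (E : {set {set V}}) (r : V)
  (c : {set V} -> R) (pi : V -> R) (F : subgraph) : Prop :=
  rooted_subtree E r F /\
  forall F', rooted_subtree E r F' -> pcst_cost c pi F <= 2 * pcst_cost c pi F'.

(* Specification of Procedure 2 (Garg): a rooted subtree with at least k vertices
   whose edge cost is at most twice the optimal rooted k-MST value. *)
Definition kmst_2approx (E : {set {set V}}) (r : V) (k : nat)
  (c : {set V} -> R) (F : subgraph) : Prop :=
  kpcst_feasible E r k F /\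
  forall F', kpcst_feasible E r k F' -> edge_cost c F <= 2 * edge_cost c F'.

Definition is_spanning_tree (W : {set V}) (E' : {set {set V}}) (F : subgraph) : Prop :=
  [/\ is_subgraph_of W E' F, F.1 = W & is_tree F].

Definition is_mst (W : {set V}) (E' : {set {set V}}) (c : {set V} -> R)
  (F : subgraph) : Prop :=
  is_spanning_tree W E' F /\
  forall T, is_spanning_tree W E' T -> edge_cost c F <= edge_cost c T.

(* Output of algorithm A, given the outputs FP of Procedure 1 and FK of Procedure 2 *)
Definition algA_output (k : nat) (c : {set V} -> R)
  (FP FK FOUT : subgraph) : Prop :=
  ((k <= #|FP.1|)%N -> FOUT = FP) /\
  ((#|FP.1| < k)%N -> is_mst (FP.1 :|: FK.1) (FP.2 :|: FK.2) c FOUT).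

End KPCST.

(* Let OPT be the cost of F*.  If k <= |V_PCST|, the output is F_PCST, of cost
   at most twice the optimal PCST value, hence at most 2 OPT since F* is a
   feasible PCST solution.  Otherwise the output spans V_PCST, so it pays no
   more penalty than F_PCST, and its edges lie in E_PCST ∪ E_kMST; its cost is
   thus at most cost(F_PCST) + c(E_kMST).  As F* is also a feasible rooted
   k-MST solution, c(E_kMST) is at most twice the edge cost of F*, i.e. at
   most OPT by hypothesis, giving 3 OPT in total. *)

From mathcomp Require Import all_boot all_order all_algebra.
From mathcomp Require Import lra.
Set Implicit Arguments. Unset Strict Implicit. Unset Printing Implicit Defensive.
Import Order.TTheory GRing.Theory Num.Theory.
Local Open Scope ring_scope.

Section NonnegSums.
Variables (R : numDomainType) (T : finType) (f : T -> R).

Lemma sumr_subset_le (A B : {set T}) :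
  A \subset B -> {in B, forall x, 0 <= f x} ->
  \sum_(x in A) f x <= \sum_(x in B) f x.
Proof.
move=> sAB f_ge0; rewrite [leRHS](big_setID A) (setIidPr sAB) /= lerDl.
by apply: sumr_ge0 => x /setDP[xB _]; apply: f_ge0.
Qed.

Lemma sumr_setU_le (A B : {set T}) :
  {in A :|: B, forall x, 0 <= f x} ->
  \sum_(x in A :|: B) f x <= \sum_(x in A) f x + \sum_(x in B) f x.
Proof.
move=> f_ge0; rewrite (big_setID A) (setIidPr (subsetUl A B)) setDUl setDv set0U.
rewrite lerD2l sumr_subset_le ?subsetDl // => x xB.
by apply: f_ge0; rewrite inE xB orbT.
Qed.

End NonnegSums.

Section Costs.
Variables (V : finType) (R : realFieldType).
Variables (c : {set V} -> R) (pi : V -> R).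
Hypothesis pi_ge0 : forall v, 0 <= pi v.

Lemma edge_cost_ge0 (E : {set {set V}}) (F : subgraph V) :
  (forall e, e \in E -> 0 <= c e) -> F.2 \subset E -> 0 <= edge_cost c F.
Proof. by move=> c_ge0 sFE; apply: sumr_ge0 => e eF; apply/c_ge0/(subsetP sFE). Qed.

Lemma pcst_cost_ge0 (E : {set {set V}}) (F : subgraph V) :
  (forall e, e \in E -> 0 <= c e) -> F.2 \subset E -> 0 <= pcst_cost c pi F.
Proof.
by move=> c_ge0 sFE; rewrite addr_ge0 ?(edge_cost_ge0 c_ge0 sFE) ?sumr_ge0.
Qed.

Lemma penalty_le_subset (F F' : subgraph V) :
  F.1 \subset F'.1 -> penalty pi F' <= penalty pi F.
Proof. by move=> sFF'; rewrite sumr_subset_le ?setCS. Qed.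

Lemma edge_cost_le_union (F F1 F2 : subgraph V) :
  (forall e, e \in F1.2 :|: F2.2 -> 0 <= c e) -> F.2 \subset F1.2 :|: F2.2 ->
  edge_cost c F <= edge_cost c F1 + edge_cost c F2.
Proof.
move=> c_ge0 sF; apply: le_trans (sumr_setU_le c_ge0).
by rewrite sumr_subset_le // => e /c_ge0.
Qed.

Lemma spanning_tree_union_cost_le (F1 F2 T : subgraph V) :
  (forall e, e \in F1.2 :|: F2.2 -> 0 <= c e) ->
  is_spanning_tree (F1.1 :|: F2.1) (F1.2 :|: F2.2) T ->
  pcst_cost c pi T <= pcst_cost c pi F1 + edge_cost c F2.
Proof.
move=> c_ge0 [[_ sT _] VT _]; rewrite /pcst_cost addrAC lerD //.
  exact: edge_cost_le_union.
by rewrite penalty_le_subset // VT subsetUl.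
Qed.

End Costs.

Theorem proposition1 (R : realFieldType) (V : finType) (E : {set {set V}})
  (r : V) (k : nat) (c : {set V} -> R) (pi : V -> R)
  (hE : is_edge_set E) (hconn : connected_on [set: V] E)
  (hc : forall e, e \in E -> 0 <= c e) (hpi : forall v, 0 <= pi v)
  (Fstar : subgraph V)
  (hopt : kpcst_optimal E r k c pi Fstar)
  (hsmall : edge_cost c Fstar <= pcst_cost c pi Fstar / 2)
  (FP FK FOUT : subgraph V)
  (hFP : pcst_2approx E r c pi FP)
  (hFK : kmst_2approx E r k c FK)
  (hOUT : algA_output k c FP FK FOUT) :
  pcst_cost c pi FOUT <= 3 * pcst_cost c pi Fstar.
Proof.
have [Fstar_feas _] := hopt.
have [[[[_ sEstar _] _ _] _] _] := hopt.
have OPT_ge0 := pcst_cost_ge0 hpi hc sEstar.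
have [[[_ sEP _] _ _] FP_approx] := hFP.
have FP_le : pcst_cost c pi FP <= 2 * pcst_cost c pi Fstar.
  exact: FP_approx Fstar_feas.1.
have [[[[_ sEK _] _ _] _] FK_approx] := hFK.
have FK_le : edge_cost c FK <= pcst_cost c pi Fstar.
  by apply: le_trans (FK_approx _ Fstar_feas) _; lra.
have [FOUT_FP FOUT_mst] := hOUT.
case: (leqP k #|FP.1|) => [/FOUT_FP -> | /FOUT_mst [FOUT_span _]]; first lra.
have c_ge0 e : e \in FP.2 :|: FK.2 -> 0 <= c e.
  by case/setUP => [/(subsetP sEP) | /(subsetP sEK)]; apply: hc.
have := spanning_tree_union_cost_le hpi c_ge0 FOUT_span; lra.
Qed.
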